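(* Let $p$ be a prime and let $G$ be a group of order $p^7$ and nilpotency class $4$ such that $\gamma_2(G)$ is elementary abelian of order $p^5$ (so that $\operatorname{Z}(G) = \gamma_4(G)$ has order $p^2$). Suppose $G = \langle \alpha_1, \alpha_2\rangle$, and put $\beta = [\alpha_1,\alpha_2]$, $\beta_i = [\beta,\alpha_i]$ and $\eta_{ij} = [\beta_i,\alpha_j]$ for $i,j \in \{1,2\}$. Assume that $\gamma_4(G) = \langle \eta_{11}, \eta_{12}\rangle$ and that $\eta_{22} = \eta_{11}^m \eta_{12}^n$ for some $m, n \in \mathbb{F}_p$, not both zero. Then $G$ admits a subgroup $H \leq \operatorname{Z}(G)$ of order $p$ with $|\operatorname{Z}(G/H)| = p^2$ if and only if the equation $m\lambda^2 + n\lambda\mu - \mu^2 = 0$ has a solution $(\lambda,\mu) = (\lambda_0,\mu_0) \in \mathbb{F}_p^2$ with $\lambda_0 \neq 0$.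
   Context: For a group $G$, $[x,y] = x^{-1}y^{-1}xy$; $\gamma_i(G)$ is the $i$-th term of the lower central series and $\operatorname{Z}(G)$ the center. $\mathbb{F}_p$ is the field with $p$ elements; exponents in $\mathbb{F}_p$ are interpreted via integer representatives (well defined since $\gamma_4(G)$ has exponent $p$). *)

From mathcomp Require Import all_boot all_order all_algebra all_fingroup all_solvable.
Set Implicit Arguments.
Unset Strict Implicit.
Unset Printing Implicit Defensive.

(* Inside the elementary abelian group gamma_2(G), every element of gamma_3(G)
   is beta1^a beta2^b w with w in gamma_4(G), and every element of gamma_4(G) is
   eta11^a eta12^b, with exponents a, b in F_p.  Counting gives |gamma_3| = p^4
   and |gamma_4| = p^2, so these coordinates are unique.  As G/gamma_3 is
   nonabelian of order p^3, its centre is gamma_2/gamma_3; hence the preimage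
   of Z(G/gamma_4) is gamma_3, and Z(G) = gamma_4.
   For H <= Z(G) of order p, the preimage K of Z(G/H) satisfies
   gamma_4 <= K < gamma_3, so |Z(G/H)| = p^2 exactly when some
   x = beta1^a beta2^b w of K lies outside gamma_4.  As [beta2, alpha_1] = eta12,
   [x, alpha_1] = eta11^a eta12^b and [x, alpha_2] = eta11^(mb) eta12^(a+nb),
   so x lies in K iff (mb, a + nb) is proportional to (a, b) != 0, which forces
   b != 0 and says exactly that (lambda, mu) = (b, -a) is a root of
   m lambda^2 + n lambda mu - mu^2. *)

From mathcomp Require Import all_boot all_order all_algebra all_fingroup all_solvable.
From mathcomp Require Import ring.
Import GRing.Theory.
Local Open Scope group_scope.
Set Implicit Arguments. Unset Strict Implicit. Unset Printing Implicit Defensive.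

Section CenterModulo.

Variable gT : finGroupType.
Implicit Types (G N : {group gT}) (A : {set gT}).

Definition center_mod G N : {group gT} := (G :&: coset N @*^-1 'Z(G / N))%G.

Lemma center_mod_genP G N A x :
    G :=: <<A>> -> N <| G ->
  reflect (x \in G /\ {in A, forall a, [~ x, a] \in N}) (x \in center_mod G N).
Proof.
move=> defG /andP[sNG nNG].
have sAG : A \subset G by rewrite defG subset_gen.
have nNA := subset_trans sAG nNG.
rewrite inE; apply: (iffP andP) => -[Gx]; have nNx := subsetP nNG x Gx.
  move=> /morphpreP[_ /centerP[_ cGx]]; split=> // a Aa.
  have nNa := subsetP nNA a Aa.
  apply: coset_idr; first exact: groupR.
  by rewrite morphR //; apply/eqP/commgP/cGx/mem_quotient/(subsetP sAG).
move=> cAx; split=> //; apply/morphpreP; split=> //.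
apply/centerP; split; first exact: mem_quotient.
suff: coset N x \in 'C(G / N) by move/centP.
rewrite defG quotient_gen -?defG // cent_gen; apply/centP => _ /morphimP[a nNa Aa ->].
by apply/commgP; rewrite -morphR //; apply/eqP/coset_id/cAx.
Qed.

Lemma center_modP G N x :
  N <| G -> reflect (x \in G /\ {in G, forall g, [~ x, g] \in N}) (x \in center_mod G N).
Proof. exact/center_mod_genP/esym/genGid. Qed.

Lemma card_center_mod G N : N <| G -> #|center_mod G N| = (#|'Z(G / N)| * #|N|)%N.
Proof.
move=> /andP[sNG nNG].
have sNK : N \subset center_mod G N.
  apply/subsetP => z Nz; rewrite inE (subsetP sNG) //=.
  by rewrite mem_morphpre ?(subsetP (normG N)) //= coset_id ?group1.
have nNK : center_mod G N \subset 'N(N) by rewrite subIset ?nNG.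
have -> : 'Z(G / N) = center_mod G N / N.
  by rewrite quotientGI // cosetpreK; apply/esym/setIidPr/center_sub.
by rewrite card_quotient // -(Lagrange sNK) mulnC.
Qed.

Lemma center_modS G N1 N2 :
  N1 <| G -> N2 <| G -> N1 \subset N2 -> center_mod G N1 \subset center_mod G N2.
Proof.
move=> nN1 nN2 sN12; apply/subsetP => x /(center_modP _ nN1)[Gx cN1x].
by apply/(center_modP _ nN2); split=> // g Gg; rewrite (subsetP sN12) ?cN1x.
Qed.

Lemma center_sub_center_mod G N : N <| G -> 'Z(G) \subset center_mod G N.
Proof.
move=> nNG; apply/subsetP => z /centerP[Gz cGz]; apply/(center_modP _ nNG).
by split=> // g Gg; have /commgP/eqP-> := cGz g Gg; apply: group1.
Qed.

Lemma lcn_sub_center_mod G N k :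
  N <| G -> 'L_k.+2(G) \subset N -> 'L_k.+1(G) \subset center_mod G N.
Proof.
move=> nNG sLN; apply/subsetP => x Lx; apply/(center_modP _ nNG).
split=> [|g Gg]; first exact: subsetP (lcn_sub _ _) x Lx.
by rewrite (subsetP sLN) // lcnSn mem_commg.
Qed.

End CenterModulo.

Section Commutators.

Variable gT : finGroupType.
Implicit Types (G N : {group gT}) (A X Y : {set gT}).

Lemma comm_comm_swap (y z : gT) (x := [~ y, z]) :
    commute x [~ x, z * y] -> commute [~ x, y] [~ x, z] ->
  [~ x, z, y] = [~ x, y, z].
Proof.
move=> cx_xzy cxy_xz.
have expand u v : [~ x, u * v] = [~ x, v] * [~ x, u] * [~ x, u, v].
  by rewrite commgMJ conjg_mulR mulgA.
have : [~ x, y * z] = [~ x, z * y].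
  by rewrite [y * z]commgC -/x [LHS]commgMJ commgg mul1g /conjg -cx_xzy mulKg.
by rewrite !expand cxy_xz => /mulgI.
Qed.

Lemma lcn_sub_center G c :
  nilpotent G -> nil_class G <= c.+1 -> 'L_c.+1(G) \subset 'Z(G).
Proof.
move=> nilG clG; rewrite subsetI lcn_sub; apply/commG1P.
exact: (lcn_nil_classP c.+1 nilG).
Qed.

Lemma lcn_sub_join_comm G A X Y k :
    G :=: <<A>> -> X \subset 'L_k.+1(G) -> Y \subset 'L_k.+2(G) ->
    {in X & A, forall x a, [~ x, a] \in <<Y>>} ->
    'L_k.+1(G) \subset <<X>> <*> 'L_k.+2(G) ->
  'L_k.+2(G) \subset <<Y>> <*> 'L_k.+3(G).
Proof.
move=> defG sXL sYL cXA sLX; set N := <<Y>> <*> _.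
have sNL : N \subset 'L_k.+2(G) by rewrite join_subG gen_subG sYL lcn_subS.
have nNG : N <| G.
  rewrite /normal (subset_trans sNL) ?lcn_sub //= -commg_subl.
  by apply: subset_trans (commSg G sNL) _; rewrite -lcnSn joing_subr.
have sLN : 'L_k.+1(G) \subset center_mod G N.
  apply: subset_trans sLX _; rewrite join_subG lcn_sub_center_mod ?joing_subr // andbT.
  rewrite gen_subG; apply/subsetP => x Xx; apply/(center_mod_genP _ defG nNG).
  split=> [|a Aa]; first exact: subsetP (lcn_sub _ _) x (subsetP sXL x Xx).
  by rewrite (subsetP (joing_subl _ _)) ?cXA.
rewrite lcnSn gen_subG; apply/subsetP => _ /imset2P[x g Lx Gg ->].
by have /(center_modP _ nNG)[_ ->] := subsetP sLN x Lx.
Qed.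

End Commutators.

Lemma gen2_joinE (gT : finGroupType) (x y : gT) (M : {group gT}) :
  <<[set x; y]>> <*> M = <[x]> <*> (<[y]> <*> M).
Proof.
have -> : <<[set x; y]>> = <[x]> <*> <[y]> by rewrite joing_idl joing_idr.
by rewrite joingA.
Qed.

Section FpExponents.

Variables (gT : finGroupType) (p : nat) (x : gT).
Hypotheses (p_pr : prime p) (xp : x ^+ p = 1).

(* Arithmetic in 'F_p is modulo (Zp_trunc (pdiv p)).+2, which equals p. *)
Let xFp : x ^+ (Zp_trunc (pdiv p)).+2 = 1.
Proof. by rewrite (Fp_cast p_pr). Qed.

Lemma expgFpD (a b : 'F_p) : x ^+ (a + b)%R = x ^+ a * x ^+ b.
Proof. by rewrite /= expg_mod // expgD. Qed.

Lemma expgFpM (a b : 'F_p) : x ^+ (a * b)%R = x ^+ a ^+ b.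
Proof. by rewrite /= expg_mod // expgM. Qed.

Lemma expgFp_nat k : x ^+ (k%:R : 'F_p)%R = x ^+ k.
Proof. by rewrite val_Fp_nat // expg_mod. Qed.

Lemma expgFpK (a : 'F_p) : a != 0%R -> x ^+ a ^+ (a^-1)%R = x.
Proof. by move=> nz_a; rewrite -expgFpM mulfV // expgFp_nat. Qed.

End FpExponents.

Definition fpcomb (gT : finGroupType) (p : nat) (x y : gT) (a b : 'F_p) : gT :=
  x ^+ a * y ^+ b.

Section ElementaryAbelian.

Variables (gT : finGroupType) (p : nat) (E : {group gT}).
Hypotheses (p_pr : prime p) (abelE : p.-abelem E).
Implicit Types (x y z : gT) (K M : {group gT}).

Let cEE : abelian E. Proof. by case/(abelemP p_pr): abelE. Qed.
Let expE x : x \in E -> x ^+ p = 1. Proof. by case/(abelemP p_pr): abelE => _; apply. Qed.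

Lemma abelem_cycle_joinE x K : x \in E -> K \subset E -> <[x]> <*> K = <[x]> * K.
Proof.
by move=> Ex sKE; apply/cent_joinEr/(sub_abelian_cent2 cEE); rewrite ?cycle_subG.
Qed.

Lemma card_abelem_cycle_join x K : x \in E -> K \subset E -> #|<[x]> <*> K| <= p * #|K|.
Proof.
move=> Ex sKE; rewrite abelem_cycle_joinE //.
apply: leq_trans (leq_pmulr _ (cardG_gt0 (<[x]> :&: K))) _.
by rewrite -mul_cardG -orderE leq_mul2r dvdn_leq ?orbT ?prime_gt0 // order_dvdn expE.
Qed.

Lemma card_abelem_gen2_join x y M :
  x \in E -> y \in E -> M \subset E -> #|<<[set x; y]>> <*> M| <= p * (p * #|M|).
Proof.
move=> Ex Ey sME; rewrite gen2_joinE.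
have sJE : <[y]> <*> M \subset E by rewrite join_subG cycle_subG Ey.
apply: leq_trans (card_abelem_cycle_join Ex sJE) _.
by rewrite leq_mul2l card_abelem_cycle_join ?orbT.
Qed.

Lemma mem_abelem_gen2_join x y M z :
    x \in E -> y \in E -> M \subset E -> z \in <<[set x; y]>> <*> M ->
  exists a b : 'F_p, exists2 w, w \in M & z = fpcomb x y a b * w.
Proof.
move=> Ex Ey sME; have sJE : <[y]> <*> M \subset E by rewrite join_subG cycle_subG Ey.
rewrite gen2_joinE (abelem_cycle_joinE Ex sJE) /= (abelem_cycle_joinE Ey sME).
move=> /mulsgP[_ _ /cycleP[i ->] /mulsgP[_ w /cycleP[j ->] Mw ->] ->].
exists (i%:R)%R, (j%:R)%R, w => //.
by rewrite /fpcomb !expgFp_nat ?mulgA ?expE.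
Qed.

Section Combinations.

Variables x y : gT.
Hypotheses (Ex : x \in E) (Ey : y \in E).

Let cxy : commute x y. Proof. exact: (centsP cEE). Qed.

Lemma fpcombD (a b c d : 'F_p) :
  fpcomb x y a b * fpcomb x y c d = fpcomb x y (a + c)%R (b + d)%R.
Proof.
rewrite /fpcomb !expgFpD ?expE // !mulgA; congr (_ * _); rewrite -!mulgA.
by congr (_ * _); apply: commuteX2.
Qed.

Lemma fpcombX (a b c : 'F_p) :
  fpcomb x y a b ^+ c = fpcomb x y (a * c)%R (b * c)%R.
Proof. by rewrite /fpcomb !expgFpM ?expE // expgMn //; apply: commuteX2. Qed.

Lemma fpcombB_eq1 (a b c d : 'F_p) :
  fpcomb x y a b = fpcomb x y c d -> fpcomb x y (a - c)%R (b - d)%R = 1.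
Proof.
by move=> eq_ab_cd; apply: (mulIg (fpcomb x y c d)); rewrite mul1g fpcombD !subrK.
Qed.

End Combinations.

Lemma fpcomb_indep x y M (a b : 'F_p) :
    x \in E -> y \in E -> M \subset E ->
    p * (p * #|M|) <= #|<<[set x; y]>> <*> M| -> fpcomb x y a b \in M ->
  a = 0%R /\ b = 0%R.
Proof.
move=> Ex Ey sME large Mxy.
suff /norP[/negPn/eqP-> /negPn/eqP->] : ~~ ((a != 0%R) || (b != 0%R)) by [].
apply: contraL large => nz_ab; rewrite -ltnNge gen2_joinE.
apply: (@leq_ltn_trans (p * #|M|)).
  have [a0 | nz_a] := eqVneq a 0%R.
    rewrite a0 eqxx /= in nz_ab; rewrite /fpcomb a0 mul1g in Mxy.
    have My : y \in M by rewrite -(expgFpK p_pr (expE Ey) nz_ab) groupX.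
    by rewrite (joing_idPr (_ : <[y]> \subset M)) ?cycle_subG ?card_abelem_cycle_join.
  have xJ : x \in <[y]> <*> M.
    rewrite -(expgFpK p_pr (expE Ex) nz_a) groupX // -(mulgK (y ^+ b) (x ^+ a)) groupM //.
      exact: subsetP (joing_subr _ _) _ Mxy.
    by rewrite groupV (subsetP (joing_subl _ _)) ?mem_cycle.
  by rewrite (joing_idPr (_ : <[x]> \subset _)) ?cycle_subG ?card_abelem_cycle_join.
by rewrite ltn_Pmull ?muln_gt0 ?cardG_gt0 ?prime_gt1 ?prime_gt0.
Qed.

End ElementaryAbelian.

Section PGroupCards.

Variables (gT : finGroupType) (p : nat).
Hypothesis p_pr : prime p.

Lemma card_proper_between (M K L : {group gT}) e :
    M \proper K -> K \proper L -> #|M| = (p ^ e)%N -> #|L| = (p ^ e.+2)%N ->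
  #|K| = (p ^ e.+1)%N.
Proof.
move=> ltMK ltKL oM oL; have [k _ oK] : exists2 k, k <= e.+2 & #|K| = (p ^ k)%N.
  by apply/(dvdn_pfactor _ _ p_pr); rewrite -oL cardSg ?proper_sub.
have := proper_card ltMK; have := proper_card ltKL.
rewrite oM oL oK !ltn_exp2l ?prime_gt1 // => ltke2 ltek.
by congr (_ ^ _)%N; apply/eqP; rewrite eqn_leq -ltnS ltke2 ltek.
Qed.

Lemma card_center_nonabelian_p3 (Q : {group gT}) :
  #|Q| = (p ^ 3)%N -> ~~ abelian Q -> #|'Z(Q)| = p.
Proof.
move=> oQ not_cQQ; have pQ : p.-group Q by rewrite /pgroup oQ pnatX pnat_id.
apply: (card_center_extraspecial pQ); apply: (p3group_extraspecial pQ) => //.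
by rewrite oQ pfactorK.
Qed.

End PGroupCards.

Section ClassFourTwoGenerator.

Variables (p : nat) (gT : finGroupType) (G : {group gT}) (a1 a2 : gT) (m n : 'F_p).
Hypotheses (p_pr : prime p) (oG : #|G| = (p ^ 7)%N).
Hypotheses (nilG : nilpotent G) (clG : nil_class G = 4).
Hypotheses (abelL2 : p.-abelem 'L_2(G)) (oL2 : #|'L_2(G)| = (p ^ 5)%N).
Hypothesis defG : G :=: <<[set a1; a2]>>.

Let beta := [~ a1, a2].
Let beta1 := [~ beta, a1].
Let beta2 := [~ beta, a2].
Let eta11 := [~ beta1, a1].
Let eta12 := [~ beta1, a2].

Hypothesis defL4 : 'L_4(G) :=: <<[set eta11; eta12]>>.
Hypothesis eta22E : [~ beta2, a2] = fpcomb eta11 eta12 m n.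

Let a1G : a1 \in G. Proof. by rewrite defG mem_gen ?set21. Qed.
Let a2G : a2 \in G. Proof. by rewrite defG mem_gen ?set22. Qed.
Let sL32 : 'L_3(G) \subset 'L_2(G). Proof. exact: lcn_subS. Qed.
Let sL43 : 'L_4(G) \subset 'L_3(G). Proof. exact: lcn_subS. Qed.
Let sL42 : 'L_4(G) \subset 'L_2(G). Proof. exact: subset_trans sL43 sL32. Qed.
Let nL3G : 'L_3(G) <| G. Proof. exact: lcn_normal. Qed.
Let nL4G : 'L_4(G) <| G. Proof. exact: lcn_normal. Qed.
Let expL2 x : x \in 'L_2(G) -> x ^+ p = 1.
Proof. by case/(abelemP p_pr): abelL2 => _; apply. Qed.
Let cL2 x y : x \in 'L_2(G) -> y \in 'L_2(G) -> commute x y.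
Proof. by case/(abelemP p_pr): abelL2 => cL2L2 _ L2x; apply: (centsP cL2L2). Qed.

Let betaL2 : beta \in 'L_2(G). Proof. by rewrite mem_commg. Qed.
Let beta1L3 : beta1 \in 'L_3(G). Proof. by rewrite mem_commg. Qed.
Let beta2L3 : beta2 \in 'L_3(G). Proof. by rewrite mem_commg. Qed.
Let beta1L2 : beta1 \in 'L_2(G). Proof. exact: subsetP sL32 _ beta1L3. Qed.
Let beta2L2 : beta2 \in 'L_2(G). Proof. exact: subsetP sL32 _ beta2L3. Qed.
Let eta11L2 : eta11 \in 'L_2(G). Proof. by rewrite (subsetP sL42) ?mem_commg. Qed.
Let eta12L2 : eta12 \in 'L_2(G). Proof. by rewrite (subsetP sL42) ?mem_commg. Qed.

Lemma lcn4_sub_center : 'L_4(G) \subset 'Z(G).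
Proof. by apply: lcn_sub_center; rewrite ?clG. Qed.

Lemma lcn2_sub_join : 'L_2(G) \subset <[beta]> <*> 'L_3(G).
Proof.
apply: (lcn_sub_join_comm (X := [set a1; a2]) defG).
- by rewrite lcn1 defG subset_gen.
- by rewrite sub1set.
- move=> x a /set2P[]-> /set2P[]->; rewrite ?commgg ?group1 //; first exact: cycle_id.
  by rewrite -invg_comm groupV; apply: cycle_id.
by apply: subset_trans (joing_subl _ _); rewrite -defG lcn_sub.
Qed.

Lemma lcn3_sub_join : 'L_3(G) \subset <<[set beta1; beta2]>> <*> 'L_4(G).
Proof.
apply: (lcn_sub_join_comm (X := [set beta]) defG).
- by rewrite sub1set.
- by rewrite subUset !sub1set beta1L3.
- by move=> x a /set1P-> /set2P[]->; rewrite mem_gen ?set21 ?set22.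
exact: lcn2_sub_join.
Qed.

Let card_lcn2_le : #|'L_2(G)| <= p * #|'L_3(G)|.
Proof.
apply: leq_trans (subset_leq_card lcn2_sub_join) _.
exact (card_abelem_cycle_join p_pr abelL2 betaL2 sL32).
Qed.

Let card_lcn3_le : #|'L_3(G)| <= p * (p * #|'L_4(G)|).
Proof.
apply: leq_trans (subset_leq_card lcn3_sub_join) _.
exact (card_abelem_gen2_join p_pr abelL2 beta1L2 beta2L2 sL42).
Qed.

Lemma card_lcn4 : #|'L_4(G)| = (p ^ 2)%N.
Proof.
have le4 : #|'L_4(G)| <= p * (p * 1).
  have := card_abelem_gen2_join p_pr abelL2 eta11L2 eta12L2 (sub1G _).
  by rewrite joingG1 cards1 defL4.
rewrite muln1 mulnn in le4; apply/eqP; rewrite eqn_leq le4 /=.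
have := leq_trans card_lcn2_le (leq_mul (leqnn p) card_lcn3_le).
have -> : (p * (p * (p * #|'L_4(G)|)) = p ^ 3 * #|'L_4(G)|)%N.
  by rewrite !expnS expn0 muln1 !mulnA.
by rewrite oL2 (_ : 5 = 3 + 2)%N // expnD leq_pmul2l ?expn_gt0 ?prime_gt0.
Qed.

Lemma card_lcn3 : #|'L_3(G)| = (p ^ 4)%N.
Proof.
apply/eqP; rewrite eqn_leq; apply/andP; split.
  by apply: leq_trans card_lcn3_le _; rewrite card_lcn4 -!expnS.
by rewrite -(leq_pmul2l (prime_gt0 p_pr)) -expnS -oL2 card_lcn2_le.
Qed.

Lemma fpcomb_eta_eq1 (a b : 'F_p) : fpcomb eta11 eta12 a b = 1 -> a = 0%R /\ b = 0%R.
Proof.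
move=> eq1; apply: (fpcomb_indep p_pr abelL2 (M := 1%G)) eta11L2 eta12L2 (sub1G _) _ _.
  by rewrite joingG1 cards1 /= -defL4 card_lcn4 muln1 mulnn.
by rewrite eq1 group1.
Qed.

Lemma fpcomb_beta_lcn4 (a b : 'F_p) :
  fpcomb beta1 beta2 a b \in 'L_4(G) -> a = 0%R /\ b = 0%R.
Proof.
apply: (fpcomb_indep p_pr abelL2) beta1L2 beta2L2 sL42 _.
apply: leq_trans (subset_leq_card lcn3_sub_join).
by rewrite card_lcn4 card_lcn3 -!expnS.
Qed.

Lemma lcn3_fpcomb x :
    x \in 'L_3(G) ->
  exists a b : 'F_p, exists2 w, w \in 'L_4(G) & x = fpcomb beta1 beta2 a b * w.
Proof.
move/(subsetP lcn3_sub_join).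
exact: (mem_abelem_gen2_join p_pr abelL2) beta1L2 beta2L2 sL42.
Qed.

Let eta21E : [~ beta2, a1] = eta12.
Proof.
apply: comm_comm_swap; last exact: cL2 beta1L2 beta2L2.
by apply: cL2 betaL2 _; rewrite (subsetP sL32) ?mem_commg ?groupM.
Qed.

Let cL4G w g : w \in 'L_4(G) -> g \in G -> commute w g.
Proof. by move=> /(subsetP lcn4_sub_center)/centerP[_ cGw] /cGw. Qed.

Let commM_lcn3 x y g :
  x \in 'L_3(G) -> y \in G -> g \in G -> [~ x * y, g] = [~ x, g] * [~ y, g].
Proof. by move=> L3x Gy Gg; rewrite commMgJ /conjg (cL4G (mem_commg L3x Gg) Gy) mulKg. Qed.

Let commX_lcn3 x g k : x \in 'L_3(G) -> g \in G -> [~ x ^+ k, g] = [~ x, g] ^+ k.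
Proof.
move=> L3x Gg; apply/commXg/commute_sym/cL4G; first by rewrite mem_commg.
exact: subsetP (lcn_sub 3 G) x L3x.
Qed.

Lemma comm_fpcomb_beta (a b : 'F_p) w g :
    w \in 'L_4(G) -> g \in G ->
  [~ fpcomb beta1 beta2 a b * w, g] = fpcomb [~ beta1, g] [~ beta2, g] a b.
Proof.
move=> L4w Gg; rewrite commM_lcn3 ?groupM ?groupX ?(subsetP (lcn_sub 4 G) w) //.
have /commgP/eqP-> : commute w g by apply: cL4G.
rewrite mulg1 /fpcomb commM_lcn3 ?groupX ?(subsetP (lcn_sub 3 G) _ beta2L3) //.
by rewrite (commX_lcn3 _ beta1L3 Gg) (commX_lcn3 _ beta2L3 Gg).
Qed.

Lemma comm_fpcomb_a1 (a b : 'F_p) w :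
  w \in 'L_4(G) -> [~ fpcomb beta1 beta2 a b * w, a1] = fpcomb eta11 eta12 a b.
Proof. by move=> L4w; rewrite comm_fpcomb_beta // eta21E. Qed.

Lemma comm_fpcomb_a2 (a b : 'F_p) w :
    w \in 'L_4(G) ->
  [~ fpcomb beta1 beta2 a b * w, a2] = fpcomb eta11 eta12 (m * b)%R (a + n * b)%R.
Proof.
move=> L4w; rewrite comm_fpcomb_beta // eta22E [LHS]/fpcomb -/eta12.
rewrite (_ : eta12 ^+ a = fpcomb eta11 eta12 0%R a); last by rewrite /fpcomb mul1g.
by rewrite (fpcombX p_pr abelL2) ?(fpcombD p_pr abelL2) ?add0r.
Qed.

Lemma center_mod_lcn3 : center_mod G 'L_3(G) :=: 'L_2(G).
Proof.
have nL3 := normal_norm nL3G.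
have oQ : #|G / 'L_3(G)| = (p ^ 3)%N.
  by rewrite card_quotient // -divgS ?lcn_sub // oG card_lcn3 -expnB ?prime_gt0.
have not_cQ : ~~ abelian (G / 'L_3(G)).
  apply/negP => /(der1_min nL3); rewrite -lcn2 => /subset_leq_card.
  by rewrite oL2 card_lcn3 leq_exp2l ?prime_gt1.
apply/eqP; rewrite eq_sym eqEcard lcn_sub_center_mod //=.
by rewrite card_center_mod // (card_center_nonabelian_p3 p_pr oQ not_cQ) card_lcn3 oL2.
Qed.

Lemma center_mod_lcn4 : center_mod G 'L_4(G) :=: 'L_3(G).
Proof.
apply/eqP; rewrite eqEsubset lcn_sub_center_mod // andbT; apply/subsetP => x Kx.
have L4x1 : [~ x, a1] \in 'L_4(G).
  by case/(center_mod_genP _ defG nL4G): Kx => _; apply; rewrite set21.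
have := subsetP (center_modS nL4G nL3G sL43) x Kx; rewrite center_mod_lcn3.
move/(subsetP lcn2_sub_join); rewrite (abelem_cycle_joinE p_pr abelL2) //.
case/mulsgP=> _ z /cycleP[k ->] L3z defx; rewrite defx in L4x1 *.
have Gz := subsetP (lcn_sub 3 G) z L3z.
move: L4x1; rewrite commMgJ groupMr ?mem_commg // memJ_norm ?(subsetP (normal_norm nL4G)) //.
rewrite commXg; last exact: cL2 betaL2 beta1L2.
rewrite -(expgFp_nat p_pr (expL2 beta1L2)) -[_ ^+ _]mulg1.
case/(fpcomb_beta_lcn4 (b := 0%R)) => k0 _.
by rewrite -(expgFp_nat p_pr (expL2 betaL2)) k0 mul1g.
Qed.

Lemma center_lcn4 : 'Z(G) :=: 'L_4(G).
Proof.
apply/eqP; rewrite eqEsubset lcn4_sub_center andbT; apply/subsetP => z Zz.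
have /centerP[_ cGz] := Zz.
have := subsetP (center_sub_center_mod nL4G) z Zz; rewrite center_mod_lcn4.
case/lcn3_fpcomb=> a [b] [w L4w defz].
have /commgP/eqP := cGz a1 a1G; rewrite defz comm_fpcomb_a1 //.
by case/fpcomb_eta_eq1=> -> ->; rewrite /fpcomb !mul1g.
Qed.

Let order_lcn4 h : h \in 'L_4(G) -> h != 1 -> #[h] = p.
Proof. by move=> L4h; apply: (abelem_order_p abelL2); apply: (subsetP sL42). Qed.

Lemma card_center_quotientP (H : {group gT}) :
    H \subset 'Z(G) -> #|H| = p ->
  reflect (#|'Z(G / H)| = (p ^ 2)%N) (~~ (center_mod G H \subset 'L_4(G))).
Proof.
move=> sHZ oH; have nHG := sub_center_normal sHZ; rewrite center_lcn4 in sHZ.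
have oK := card_center_mod nHG; rewrite oH in oK.
apply: (iffP idP) => [/subsetPn[x Kx notL4x] | oZ]; last first.
  by apply/negP => /subset_leq_card; rewrite oK oZ -expnSr card_lcn4 leq_exp2l ?prime_gt1.
have sKL3 : center_mod G H \subset 'L_3(G).
  by rewrite -center_mod_lcn4 center_modS.
have notKbeta1 : beta1 \notin center_mod G H.
  apply/negP => /(center_mod_genP _ defG nHG)[_ cHbeta1].
  have : 'L_4(G) \subset H by rewrite defL4 gen_subG subUset !sub1set !cHbeta1 ?set21 ?set22.
  by move/subset_leq_card; rewrite card_lcn4 oH -mulnn leqNgt ltn_Pmull ?prime_gt1 ?prime_gt0.
have oK3 : #|center_mod G H| = (p ^ 3)%N.
  apply: (card_proper_between p_pr (e := 2)) card_lcn4 card_lcn3; rewrite properE.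
    by rewrite (subset_trans lcn4_sub_center) ?center_sub_center_mod //; apply/subsetPn; exists x.
  by rewrite sKL3; apply/subsetPn; exists beta1.
by move: oK; rewrite oK3 expnSr => /eqP; rewrite eqn_pmul2r ?prime_gt0 // => /eqP.
Qed.

Lemma center_quotient_root (H : {group gT}) :
    H \subset 'Z(G) -> #|H| = p -> #|'Z(G / H)| = (p ^ 2)%N ->
  exists lam mu : 'F_p, lam != 0%R /\ (m * lam ^+ 2 + n * lam * mu - mu ^+ 2 = 0)%R.
Proof.
move=> sHZ oH /(card_center_quotientP sHZ oH)/subsetPn[x Kx notL4x].
have nHG := sub_center_normal sHZ; rewrite center_lcn4 in sHZ.
have /(center_mod_genP _ defG nHG)[_ cHx] := Kx.
have := subsetP (center_modS nHG nL4G sHZ) x Kx; rewrite center_mod_lcn4.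
case/lcn3_fpcomb=> a [b] [w L4w defx].
have := cHx a1 (set21 a1 a2); have := cHx a2 (set22 a1 a2).
rewrite defx comm_fpcomb_a1 // comm_fpcomb_a2 //; set h := fpcomb eta11 eta12 a b.
move=> Hh2 Hh; have L4h : h \in 'L_4(G) by rewrite groupM ?groupX ?mem_commg.
have nt_h : h != 1.
  by apply: contra notL4x => /eqP/fpcomb_eta_eq1[a0 b0]; rewrite defx a0 b0 /fpcomb !mul1g.
have defH : H :=: <[h]>.
  by apply/eqP; rewrite eq_sym eqEcard cycle_subG Hh -orderE oH order_lcn4 ?leqnn.
move: Hh2; rewrite defH => /cycleP[t].
rewrite -(expgFp_nat p_pr (expL2 (subsetP sL42 _ L4h))) (fpcombX p_pr abelL2) //.
case/(fpcombB_eq1 p_pr abelL2 eta11L2 eta12L2)/fpcomb_eta_eq1; set s := (t%:R)%R.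
move=> e1 e2; have nz_b : b != 0%R.
  apply: contra nt_h => /eqP b0; move: e2; rewrite b0 mulr0 mul0r addr0 subr0 => a0.
  by rewrite /h a0 b0 /fpcomb !mul1g.
exists b, (- a)%R; split=> //.
have -> : (m * b ^+ 2 + n * b * - a - (- a) ^+ 2 =
           b * (m * b - a * s) - a * (a + n * b - b * s))%R by ring.
by rewrite e1 e2 !mulr0 subr0.
Qed.

Lemma root_center_quotient (lam mu : 'F_p) :
    lam != 0%R -> (m * lam ^+ 2 + n * lam * mu - mu ^+ 2 = 0)%R ->
  exists H : {group gT}, [/\ H \subset 'Z(G), #|H| = p & #|'Z(G / H)| = (p ^ 2)%N].
Proof.
move=> nz_lam root; set a := (- mu)%R.
set x := fpcomb beta1 beta2 a lam; set h := fpcomb eta11 eta12 a lam.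
have L4h : h \in 'L_4(G) by rewrite groupM ?groupX ?mem_commg.
have nt_h : h != 1 by apply/eqP => /fpcomb_eta_eq1[_ lam0]; rewrite lam0 eqxx in nz_lam.
have sHZ : <[h]> \subset 'Z(G) by rewrite center_lcn4 cycle_subG.
have ohH : #|<[h]>| = p by rewrite -orderE order_lcn4.
exists <[h]>%G; split=> //; apply/(card_center_quotientP sHZ ohH)/subsetPn.
exists x; last by apply/negP => /fpcomb_beta_lcn4[_ lam0]; rewrite lam0 eqxx in nz_lam.
apply/(center_mod_genP _ defG (sub_center_normal sHZ)); split.
  by rewrite groupM ?groupX ?(subsetP (lcn_sub 3 G)).
move=> _ /set2P[]->; rewrite -[x]mulg1 ?comm_fpcomb_a1 ?comm_fpcomb_a2 //; first exact: cycle_id.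
apply/cycleP; exists ((a + n * lam) / lam)%R; rewrite (fpcombX p_pr abelL2) //.
congr fpcomb; last by rewrite [RHS]mulrC divfK.
apply: (mulIf nz_lam); rewrite -[RHS]mulrA divfK //; apply/eqP; rewrite -subr_eq0 -root /a.
by apply/eqP; ring.
Qed.

End ClassFourTwoGenerator.

Unset Implicit Arguments.

Theorem lemma4p2 (p : nat) (gT : finGroupType) (G : {group gT})
    (a1 a2 : gT) (m n : 'F_p) :
  prime p ->
  #|G| = (p ^ 7)%N ->
  nilpotent G -> nil_class G = 4%N ->
  p.-abelem 'L_2(G) -> #|'L_2(G)| = (p ^ 5)%N ->
  G :=: <<[set a1; a2]>> ->
  let beta := [~ a1, a2] in
  let beta1 := [~ beta, a1] in
  let beta2 := [~ beta, a2] in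
  let eta11 := [~ beta1, a1] in
  let eta12 := [~ beta1, a2] in
  let eta22 := [~ beta2, a2] in
  'L_4(G) :=: <<[set eta11; eta12]>> ->
  eta22 = (eta11 ^+ (m : nat) * eta12 ^+ (n : nat))%g ->
  (m != 0%R) || (n != 0%R) ->
  (exists H : {group gT},
      [/\ H \subset 'Z(G), #|H| = p & #|'Z(G / H)| = (p ^ 2)%N])
  <->
  (exists lam mu : 'F_p,
      lam != 0%R /\ (m * lam ^+ 2 + n * lam * mu - mu ^+ 2 = 0)%R).
Proof.
(* The argument never uses that m and n are not both zero. *)
move=> p_pr oG nilG clG abelL2 oL2 defG beta beta1 beta2 eta11 eta12 eta22 defL4 eta22E _.
split=> [[H [sHZ oH oZ]] | [lam [mu [nz_lam root]]]].
  exact: (center_quotient_root p_pr oG nilG clG abelL2 oL2 defG defL4 eta22E sHZ oH oZ).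
exact: (root_center_quotient p_pr oG nilG clG abelL2 oL2 defG defL4 eta22E nz_lam root).
Qed.
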